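(* Assume the setting in the context, with a decomposition of $\mathcal X$ over $A$ and a cost function $g\in\mathcal G_s$. If $$\mathcal R(B)=\bigoplus_{i\in\mathcal I}\big[\mathcal R(B)\cap\mathcal X_i\big],$$ then $\{(A,B|_{\mathcal E_i},g,T)\}_{i\in\mathcal I}$ is a decomposition of $(A,B,g,T)$ for every integer $T>0$, and $\{(A,B|_{\mathcal E_i},g,\alpha)\}_{i\in\mathcal I}$ is a decomposition of $(A,B,g,\alpha)$ for every $\alpha\in(0,1)$.
   Context: Let $\mathcal F$ be a field and $\mathcal X,\mathcal U$ finite-dimensional vector spaces over $\mathcal F$. Let $A:\mathcal X\to\mathcal X$ and $B:\mathcal U\to\mathcal X$ be linear maps with $B$ injective; $\mathcal R(B)$ is the range of $B$. Consider the system $x_{t+1}=Ax_t+Bu_t$ and a cost $g:\mathcal X\to\mathbb R_{\ge 0}$ with $g(x)=0\iff x=0$. Standing assumption: all minima appearing below are attained. Finite-horizon problem $(A,B,g,T)$ ($T>0$ integer): policies $\pi(x_0)=(\pi_t(x_0))_{t=0}^{T-1}\in\mathcal U^T$, cost $J(x_0,\pi)=\sum_{t=0}^T g(x_t)$ with $x_{t+1}=Ax_t+B\pi_t(x_0)$. Infinite-horizon problem $(A,B,g,\alpha)$ ($\alpha\in(0,1)$): policies $\pi(x_0)\in\mathcal U^{\mathbb Z_+}$, cost $J(x_0,\pi)=\sum_{t\ge0}\alpha^tg(x_t)$. In both, $J^*(x_0)=\min_\pi J(x_0,\pi)$ and a minimizing policy is optimal at $x_0$. A decomposition of $\mathcal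 X$ over $A$ is a direct sum $\mathcal X=\mathcal X_1\oplus\cdots\oplus\mathcal X_r$ with $r>1$ and $A\mathcal X_i\subseteq\mathcal X_i$, $i\in\mathcal I=\{1,\dots,r\}$; $\rho_i:\mathcal X\to\mathcal X_i$ is the projection along the other summands. $\mathcal G_s$ is the set of $h:\mathcal X\to\mathbb R_{\ge0}$ with $h(x)=\sum_i h(\rho_i(x))$ for all $x$. $\mathcal E_i=\{u\in\mathcal U:Bu\in\mathcal X_i\}$. Subproblems $(A,B|_{\mathcal E_i},g,T)$ and $(A,B|_{\mathcal E_i},g,\alpha)$: the same problems for the system $x_{i,t+1}=Ax_{i,t}+B\bar u_{i,t}$ with states in $\mathcal X_i$ and inputs in $\mathcal E_i$; optimal costs $\bar J_i^*$, optimal policies $\bar\pi_i^*$. Definition 1: the family of subproblems is a decomposition of the original problem if for every $x\in\mathcal X$: $J^*(x)=\sum_i\bar J_i^*(\rho_i(x))$, and for every choice of optimal policies $\bar\pi_i^*(\rho_i(x))$ there exists an optimal policy $\pi^*(x)$ of the original problem with $\pi^*(x)=\sum_i\bar\pi_i^*(\rho_i(x))$ (componentwise sum). *)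

From HB Require Import structures.
From mathcomp Require Import all_boot all_order all_algebra.
From Stdlib Require Import Reals ClassicalEpsilon.

Set Implicit Arguments.
Unset Strict Implicit.
Unset Printing Implicit Defensive.

Import GRing.Theory.

(* Extended nonnegative-real values [0, +oo] for infinite-horizon costs. *)
Inductive ereal := EFin (x : R) | EInf.

Definition ere_le (a b : ereal) : Prop :=
  match a, b with
  | _, EInf => True
  | EInf, EFin _ => False
  | EFin x, EFin y => Rle x y
  end.

Definition ere_add (a b : ereal) : ereal :=
  match a, b with
  | EFin x, EFin y => EFin (Rplus x y)
  | _, _ => EInf
  end.

(* Value of a series: its (real) sum if it converges, +oo otherwise
   (for nonnegative terms this is the sum in [0, +oo]). *)
Definition series_ereal (a : nat -> R) : ereal :=
  match excluded_middle_informative (exists l, infinite_sum a l) with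
  | left H => EFin (proj1_sig (constructive_indefinite_description _ H))
  | right _ => EInf
  end.

Section Control.
Local Open Scope ring_scope.
Variables (F : fieldType) (X U : vectType F).

Fixpoint traj (A : 'End(X)) (B : 'Hom(U, X)) (x0 : X) (u : nat -> U) (t : nat)
  : X :=
  match t with
  | 0 => x0
  | t'.+1 => A (traj A B x0 u t') + B (u t')
  end.

Definition fin_cost A B (g : X -> R) (T : nat) (x0 : X) (u : nat -> U) : R :=
  sum_f_R0 (fun t => g (traj A B x0 u t)) T.

Definition disc_cost A B (g : X -> R) (alpha : R) (x0 : X) (u : nat -> U)
  : ereal :=
  series_ereal (fun t => Rmult (pow alpha t) (g (traj A B x0 u t))).

(* Input sequences with values in the input space E (only the first T
   inputs matter for the finite horizon problem). *)
Definition fin_admissible (E : {vspace U}) (T : nat) (u : nat -> U) : Prop :=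
  forall t, leq t.+1 T -> u t \in E.

Definition disc_admissible (E : {vspace U}) (u : nat -> U) : Prop :=
  forall t, u t \in E.

Definition fin_optimal (E : {vspace U}) A B g T x0 (u : nat -> U) : Prop :=
  fin_admissible E T u /\
  forall u', fin_admissible E T u' ->
    Rle (fin_cost A B g T x0 u) (fin_cost A B g T x0 u').

Definition disc_optimal (E : {vspace U}) A B g alpha x0 (u : nat -> U) : Prop :=
  disc_admissible E u /\
  forall u', disc_admissible E u' ->
    ere_le (disc_cost A B g alpha x0 u) (disc_cost A B g alpha x0 u').

Definition Esub (B : 'Hom(U, X)) (Xi : {vspace X}) : {vspace U} :=
  (B @^-1: Xi)%VS.

Definition fin_attained (r : nat) (Xs : 'I_r -> {vspace X}) A B g T : Prop :=
  (forall x, exists u, fin_optimal fullv A B g T x u) /\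
  (forall i x, x \in Xs i -> exists u, fin_optimal (Esub B (Xs i)) A B g T x u).

Definition disc_attained (r : nat) (Xs : 'I_r -> {vspace X}) A B g alpha : Prop :=
  (forall x, exists u, disc_optimal fullv A B g alpha x u) /\
  (forall i x, x \in Xs i ->
     exists u, disc_optimal (Esub B (Xs i)) A B g alpha x u).

Definition is_decomposition_fin (r : nat) (Xs : 'I_r -> {vspace X})
    (rho : 'I_r -> X -> X) A B g T : Prop :=
  forall x : X,
    (forall u (ub : 'I_r -> nat -> U),
        fin_optimal fullv A B g T x u ->
        (forall i, fin_optimal (Esub B (Xs i)) A B g T (rho i x) (ub i)) ->
        fin_cost A B g T x u
        = \big[Rplus/R0]_(i < r) fin_cost A B g T (rho i x) (ub i)) /\
    (forall ub : 'I_r -> nat -> U,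
        (forall i, fin_optimal (Esub B (Xs i)) A B g T (rho i x) (ub i)) ->
        fin_optimal fullv A B g T x (fun t => \sum_(i < r) ub i t)).

Definition is_decomposition_disc (r : nat) (Xs : 'I_r -> {vspace X})
    (rho : 'I_r -> X -> X) A B g alpha : Prop :=
  forall x : X,
    (forall u (ub : 'I_r -> nat -> U),
        disc_optimal fullv A B g alpha x u ->
        (forall i, disc_optimal (Esub B (Xs i)) A B g alpha (rho i x) (ub i)) ->
        disc_cost A B g alpha x u
        = \big[ere_add/EFin R0]_(i < r) disc_cost A B g alpha (rho i x) (ub i)) /\
    (forall ub : 'I_r -> nat -> U,
        (forall i, disc_optimal (Esub B (Xs i)) A B g alpha (rho i x) (ub i)) ->
        disc_optimal fullv A B g alpha x (fun t => \sum_(i < r) ub i t)).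

End Control.

(* The projections rho_i commute with the dynamics: the trajectory from x
   driven by a sum of inputs w_i with B w_i in X_i is the sum of the
   trajectories from rho_i x driven by w_i, because each X_i is A-invariant.
   Since g is separable, the cost of such a summed policy is the sum of the
   subproblem costs.  The hypothesis on R(B) says that every input u can be
   split into inputs u_i in E_i with B u = sum_i B u_i, so every policy of the
   original problem has the cost of a summed policy of subproblem policies;
   hence the sum of subproblem optima is optimal and the optimal costs add up. *)
From Stdlib Require Import Reals Lra FunctionalExtensionality ClassicalEpsilon Classical.
From HB Require Import structures.
From mathcomp Require Import all_boot all_order all_algebra.

Set Implicit Arguments.
Unset Strict Implicit.
Unset Printing Implicit Defensive.

Lemma series_ereal_EFin a l : infinite_sum a l -> series_ereal a = EFin l.
Proof.
move=> sum_al; rewrite /series_ereal.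
case: excluded_middle_informative => [ex_sum | no_sum]; last by case: no_sum; exists l.
congr EFin; case: constructive_indefinite_description => l' /= sum_al'.
exact: uniqueness_sum sum_al' sum_al.
Qed.

Lemma series_ereal_EInf a : ~ (exists l, infinite_sum a l) -> series_ereal a = EInf.
Proof. by rewrite /series_ereal; case: excluded_middle_informative. Qed.

Lemma ex_infinite_sum_le a b :
  (forall t, Rle 0 (a t) /\ Rle (a t) (b t)) ->
  (exists l, infinite_sum b l) -> exists l, infinite_sum a l.
Proof.
move=> le_ab /constructive_indefinite_description sum_b.
by case: (Rseries_CV_comp _ _ le_ab sum_b) => l sum_a; exists l.
Qed.

Lemma series_ereal_add a b :
  (forall t, Rle 0 (a t)) -> (forall t, Rle 0 (b t)) ->
  series_ereal (fun t => Rplus (a t) (b t))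
  = ere_add (series_ereal a) (series_ereal b).
Proof.
move=> a_ge0 b_ge0.
have [[la sum_a] | no_sum_a] := classic (exists l, infinite_sum a l); last first.
  rewrite (series_ereal_EInf no_sum_a) series_ereal_EInf // => sum_ab.
  by apply/no_sum_a/(ex_infinite_sum_le _ sum_ab) => t; split; [|have := b_ge0 t; lra].
have [[lb sum_b] | no_sum_b] := classic (exists l, infinite_sum b l); last first.
  rewrite (series_ereal_EInf no_sum_b) series_ereal_EInf; first by case: series_ereal.
  move=> sum_ab; apply/no_sum_b/(ex_infinite_sum_le _ sum_ab) => t.
  by split; [|have := a_ge0 t; lra].
rewrite (series_ereal_EFin sum_a) (series_ereal_EFin sum_b); apply: series_ereal_EFin.
move=> eps /(CV_plus _ _ _ _ sum_a sum_b) [N close_N].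
by exists N => n /close_N; rewrite plus_sum.
Qed.

Lemma series_ereal0 : series_ereal (fun _ => R0) = EFin R0.
Proof.
apply: series_ereal_EFin => eps eps_gt0; exists 0%nat => n _.
by rewrite sum_eq_R0 // /R_dist Rminus_0_r Rabs_R0.
Qed.

Lemma morph_big_pointwise (S : Type) (op : S -> S -> S) (idx : S)
    (Phi : (nat -> R) -> S) (I : Type) (s : seq I) (f : I -> nat -> R) :
  Phi (fun _ => R0) = idx ->
  (forall a b, (forall t, Rle 0 (a t)) -> (forall t, Rle 0 (b t)) ->
     Phi (fun t => Rplus (a t) (b t)) = op (Phi a) (Phi b)) ->
  (forall i t, Rle 0 (f i t)) ->
  Phi (fun t => \big[Rplus/R0]_(i <- s) f i t) = \big[op/idx]_(i <- s) Phi (f i).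
Proof.
move=> Phi0 PhiD f_ge0; elim: s => [|i s IHs].
  rewrite big_nil -Phi0; congr Phi.
  by apply: functional_extensionality => t; rewrite big_nil.
have sum_ge0 t : Rle 0 (\big[Rplus/R0]_(j <- s) f j t).
  by apply: big_ind => //; [lra | move=> x y; lra].
rewrite big_cons -IHs -PhiD //.
by congr Phi; apply: functional_extensionality => t; rewrite big_cons.
Qed.

Lemma Rmult_big (I : Type) (s : seq I) (f : I -> R) c :
  Rmult c (\big[Rplus/R0]_(i <- s) f i) = \big[Rplus/R0]_(i <- s) Rmult c (f i).
Proof. by apply: big_morph => [x y|]; rewrite ?Rmult_plus_distr_l ?Rmult_0_r. Qed.

Lemma ere_le_anti a b : ere_le a b -> ere_le b a -> a = b.
Proof. by case: a; case: b => //= x y le_yx le_xy; congr EFin; lra. Qed.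

Lemma ere_le_add a1 a2 b1 b2 :
  ere_le a1 a2 -> ere_le b1 b2 -> ere_le (ere_add a1 b1) (ere_add a2 b2).
Proof. by case: a1; case: a2; case: b1; case: b2 => //= *; lra. Qed.

Import GRing.Theory.
Local Open Scope ring_scope.

Section Trajectories.
Variables (F : fieldType) (X U : vectType F) (A : 'End(X)) (B : 'Hom(U, X)).

Lemma eq_traj x u u' :
  (forall t, B (u t) = B (u' t)) -> traj A B x u =1 traj A B x u'.
Proof. by move=> eq_Bu; elim=> //= t ->; rewrite eq_Bu. Qed.

Lemma traj_sum r (x : 'I_r -> X) (w : 'I_r -> nat -> U) t :
  traj A B (\sum_(i < r) x i) (fun t => \sum_(i < r) w i t) t
  = \sum_(i < r) traj A B (x i) (w i) t.
Proof. by elim: t => //= t ->; rewrite !linear_sum -big_split. Qed.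

Lemma traj_invariant (V : {vspace X}) x w t :
  (A @: V <= V)%VS -> x \in V ->
  (forall s, (s < t)%N -> w s \in Esub B V) -> traj A B x w t \in V.
Proof.
move=> AV_V xV; elim: t => //= t IHt w_V.
rewrite memvD //; last by rewrite memv_preim w_V.
by apply/(subvP AV_V)/memv_img/IHt => s lt_st; apply/w_V/ltnW.
Qed.

End Trajectories.

Section DirectSum.
Variables (F : fieldType) (X : vectType F) (r : nat).
Variables (Xs : 'I_r -> {vspace X}) (rho : 'I_r -> X -> X).
Hypothesis Xs_direct : directv (\sum_(i < r) Xs i).
Hypothesis rho_in : forall i x, rho i x \in Xs i.
Hypothesis rho_sum : forall x, x = \sum_(i < r) rho i x.

Lemma rho_sum_components (z : 'I_r -> X) :
  (forall i, z i \in Xs i) -> forall i, rho i (\sum_(j < r) z j) = z i.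
Proof.
move=> z_in i; apply/eqP; rewrite -subr_eq0; apply/eqP.
move/directv_sum_independent: Xs_direct => /(_ (fun j => rho j (\sum_k z k) - z j)).
apply=> // [j _|]; first by rewrite memvB.
by rewrite sumrB -rho_sum subrr.
Qed.

Section Inputs.
Variables (U : vectType F) (B : 'Hom(U, X)).
Hypothesis limg_split : limg B = (\sum_(i < r) (limg B :&: Xs i))%VS.

Lemma rho_limg i x : x \in limg B -> rho i x \in limg B.
Proof.
rewrite {1}limg_split => /memv_sumP [z z_in ->].
have z_Xs j : z j \in Xs j by case/memv_capP: (z_in j isT).
by rewrite rho_sum_components //; case/memv_capP: (z_in i isT).
Qed.

(* The i-th component of an input: the preimage under B of the X_i-component
   of B u, which lies in R(B) by the hypothesis on R(B). *)
Definition split_input (u : U) i := (B^-1)%VF (rho i (B u)).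

Lemma B_split_input u i : B (split_input u i) = rho i (B u).
Proof. by rewrite limg_lfunVK // rho_limg // memv_img ?memvf. Qed.

Lemma split_input_in u i : split_input u i \in Esub B (Xs i).
Proof. by rewrite /Esub -memv_preim B_split_input. Qed.

Lemma B_split_input_sum u : B (\sum_(i < r) split_input u i) = B u.
Proof.
by rewrite linear_sum [RHS]rho_sum; apply: eq_bigr => i _; apply: B_split_input.
Qed.

End Inputs.
End DirectSum.

Section Decomposition.
Variables (F : fieldType) (X U : vectType F) (A : 'End(X)) (B : 'Hom(U, X)).
Variables (g : X -> R) (r : nat) (Xs : 'I_r -> {vspace X}) (rho : 'I_r -> X -> X).
Hypothesis Xs_direct : directv (\sum_(i < r) Xs i).
Hypothesis A_invariant : forall i, (A @: Xs i <= Xs i)%VS.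
Hypothesis rho_in : forall i x, rho i x \in Xs i.
Hypothesis rho_sum : forall x, x = \sum_(i < r) rho i x.
Hypothesis g_ge0 : forall x, Rle 0 (g x).
Hypothesis g_separable : forall x, g x = \big[Rplus/R0]_(i < r) g (rho i x).
Hypothesis limg_split : limg B = (\sum_(i < r) (limg B :&: Xs i))%VS.

Let sum_policy (w : 'I_r -> nat -> U) t := \sum_(i < r) w i t.
Let split_policy (u : nat -> U) i t := split_input rho B (u t) i.

Lemma g_traj_sum_policy x w t :
  (forall i s, (s < t)%N -> w i s \in Esub B (Xs i)) ->
  g (traj A B x (sum_policy w) t)
  = \big[Rplus/R0]_(i < r) g (traj A B (rho i x) (w i) t).
Proof.
move=> w_in; rewrite g_separable; apply: eq_bigr => i _; congr g.
rewrite {1}[x]rho_sum /sum_policy traj_sum (rho_sum_components Xs_direct) // => j.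
by apply: traj_invariant => // s; apply: w_in.
Qed.

Lemma traj_split_policy x u :
  traj A B x (sum_policy (split_policy u)) =1 traj A B x u.
Proof.
by apply: eq_traj => t; apply: (B_split_input_sum Xs_direct rho_in rho_sum limg_split).
Qed.

Lemma fin_cost_sum_policy T x w :
  (forall i, fin_admissible (Esub B (Xs i)) T (w i)) ->
  fin_cost A B g T x (sum_policy w)
  = \big[Rplus/R0]_(i < r) fin_cost A B g T (rho i x) (w i).
Proof.
move=> w_in; rewrite /fin_cost.
have cost_ge0 i t : Rle 0 (g (traj A B (rho i x) (w i) t)) by apply: g_ge0.
have sum0 : sum_f_R0 (fun _ => R0) T = R0 by apply: sum_eq_R0.
rewrite -(morph_big_pointwise _ sum0 (fun a b _ _ => plus_sum a b T) cost_ge0).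
apply: PartSum.sum_eq => t /leP le_tT; apply: g_traj_sum_policy => i s lt_st.
exact/w_in/(leq_trans lt_st).
Qed.

Lemma disc_cost_sum_policy alpha x w :
  Rle 0 alpha -> (forall i, disc_admissible (Esub B (Xs i)) (w i)) ->
  disc_cost A B g alpha x (sum_policy w)
  = \big[ere_add/EFin R0]_(i < r) disc_cost A B g alpha (rho i x) (w i).
Proof.
move=> alpha_ge0 w_in; rewrite /disc_cost.
have cost_ge0 i t : Rle 0 (Rmult (pow alpha t) (g (traj A B (rho i x) (w i) t))).
  by apply: Rmult_le_pos; [apply: pow_le | apply: g_ge0].
rewrite -(morph_big_pointwise _ series_ereal0 series_ereal_add cost_ge0).
congr series_ereal; apply: functional_extensionality => t.
by rewrite g_traj_sum_policy ?Rmult_big // => i s _; apply: w_in.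
Qed.

Lemma fin_optimal_sum_policy T x ub :
  (forall i, fin_optimal (Esub B (Xs i)) A B g T (rho i x) (ub i)) ->
  fin_optimal fullv A B g T x (sum_policy ub).
Proof.
move=> ub_opt; split=> [t _|u _]; first exact: memvf.
have split_adm i : fin_admissible (Esub B (Xs i)) T (split_policy u i).
  by move=> t _; apply: (split_input_in Xs_direct rho_in rho_sum limg_split).
have -> : fin_cost A B g T x u = fin_cost A B g T x (sum_policy (split_policy u)).
  by apply: PartSum.sum_eq => t _; rewrite traj_split_policy.
rewrite !fin_cost_sum_policy // => [|i]; last by case: (ub_opt i).
apply: big_ind2 => [|a1 a2 b1 b2|i _]; [lra | lra | exact: (proj2 (ub_opt i))].
Qed.

Lemma disc_optimal_sum_policy alpha x ub :
  Rle 0 alpha ->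
  (forall i, disc_optimal (Esub B (Xs i)) A B g alpha (rho i x) (ub i)) ->
  disc_optimal fullv A B g alpha x (sum_policy ub).
Proof.
move=> alpha_ge0 ub_opt; split=> [t|u _]; first exact: memvf.
have split_adm i : disc_admissible (Esub B (Xs i)) (split_policy u i).
  by move=> t; apply: (split_input_in Xs_direct rho_in rho_sum limg_split).
have -> : disc_cost A B g alpha x u
          = disc_cost A B g alpha x (sum_policy (split_policy u)).
  by congr series_ereal; apply: functional_extensionality => t; rewrite traj_split_policy.
rewrite !disc_cost_sum_policy // => [|i]; last by case: (ub_opt i).
apply: big_ind2 => [|a1 a2 b1 b2|i _]; [by apply: Rle_refl | exact: ere_le_add |].
exact: (proj2 (ub_opt i)).
Qed.

Lemma decomposition_fin T : is_decomposition_fin Xs rho A B g T.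
Proof.
move=> x; split=> [u ub u_opt ub_opt|]; last exact: fin_optimal_sum_policy.
have sum_opt := fin_optimal_sum_policy ub_opt.
rewrite -fin_cost_sum_policy => [|i]; last by case: (ub_opt i).
apply: Rle_antisym; first exact: (proj2 u_opt _ (proj1 sum_opt)).
exact: (proj2 sum_opt _ (proj1 u_opt)).
Qed.

Lemma decomposition_disc alpha :
  Rle 0 alpha -> is_decomposition_disc Xs rho A B g alpha.
Proof.
move=> alpha_ge0 x; split=> [u ub u_opt ub_opt|ub]; last exact: disc_optimal_sum_policy.
have sum_opt := disc_optimal_sum_policy alpha_ge0 ub_opt.
rewrite -disc_cost_sum_policy // => [|i]; last by case: (ub_opt i).
apply: ere_le_anti; first exact: (proj2 u_opt _ (proj1 sum_opt)).
exact: (proj2 sum_opt _ (proj1 u_opt)).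
Qed.

End Decomposition.

Theorem theorem1 (F : fieldType) (X U : vectType F)
    (A : 'End(X)) (B : 'Hom(U, X)) (g : X -> R)
    (r : nat) (Xs : 'I_r -> {vspace X}) (rho : 'I_r -> X -> X) :
  (lker B = 0)%VS ->
  leq 2 r ->
  directv (\sum_(i < r) Xs i)%VS ->
  (\sum_(i < r) Xs i)%VS = fullv ->
  (forall i, (A @: Xs i <= Xs i)%VS) ->
  (forall i x, rho i x \in Xs i) ->
  (forall x, x = (\sum_(i < r) rho i x)%R) ->
  (forall x, Rle R0 (g x)) ->
  (forall x, g x = R0 <-> x = 0%R) ->
  (forall x, g x = \big[Rplus/R0]_(i < r) g (rho i x)) ->
  directv (\sum_(i < r) (limg B :&: Xs i))%VS ->
  limg B = (\sum_(i < r) (limg B :&: Xs i))%VS ->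
  (forall T : nat, leq 1 T ->
     fin_attained Xs A B g T -> is_decomposition_fin Xs rho A B g T) /\
  (forall alpha : R, Rlt R0 alpha -> Rlt alpha R1 ->
     disc_attained Xs A B g alpha -> is_decomposition_disc Xs rho A B g alpha).
Proof.
move=> _ _ Xs_direct _ A_inv rho_in rho_sum g_ge0 _ g_sep _ limg_split.
split=> [T _ _ | alpha alpha_gt0 _ _].
  exact: decomposition_fin.
by apply: decomposition_disc => //; apply: Rlt_le.
Qed.
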